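(* Let $E$ be a graph, $S\subseteq R(E)$ and $K$ a field with involution. Define the graph $E_S$ by $E_S^0=E^0\cup\{v':v\in R(E)\setminus S\}$ and $E_S^1=E^1\cup\{e':e\in E^1,\ \mathbf{r}(e)\in R(E)\setminus S\}$ (new symbols $v'$, $e'$), where $\mathbf{s},\mathbf{r}$ agree with those of $E$ on $E^1$, and $\mathbf{s}(e')=\mathbf{s}(e)$, $\mathbf{r}(e')=\mathbf{r}(e)'$. Define $\phi$ on vertices of $E_S$ by $\phi(v)=v$ if $v\notin R(E)\setminus S$, $\phi(v)=\sum_{e\in\mathbf{s}^{-1}(v)}ee^*$ if $v\in R(E)\setminus S$, and $\phi(v')=v-\sum_{e\in\mathbf{s}^{-1}(v)}ee^*$ for $v\in R(E)\setminus S$; on edges by $\phi(e)=e\,\phi(\mathbf{r}(e))$ for $e\in E^1$ and $\phi(e')=e\,\phi(\mathbf{r}(e)')$; and on ghost edges by $\phi(f^* )=\phi(f)^*$ for $f\in E_S^1$ (all values in $CL_K(E,S)$). Then $\phi$ extends uniquely to a $K$-algebra $*$-isomorphism $\phi:L_K(E_S)\to CL_K(E,S)$.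
   Context: A (directed) graph $E=(E^0,E^1,\mathbf{s},\mathbf{r})$ has vertex set $E^0$, edge set $E^1$, source and range maps; no finiteness or countability is assumed. Paths are vertices or sequences $e_1\cdots e_n$ of edges with $\mathbf{r}(e_i)=\mathbf{s}(e_{i+1})$. A vertex $v$ is regular if $\mathbf{s}^{-1}(v)$ is nonempty and finite; $R(E)$ is the set of regular vertices. $K$ has an arbitrary involution $a\mapsto a^*$. For $S\subseteq R(E)$, $CL_K(E,S)$ is the free $K$-algebra generated by $E^0\cup E^1\cup\{e^*:e\in E^1\}$ subject to (V) $vw=\delta_{v,w}v$; (E1) $\mathbf{s}(e)e=e\mathbf{r}(e)=e$; (E2) $\mathbf{r}(e)e^*=e^*\mathbf{s}(e)=e^*$; (CK1) $e^*f=\delta_{e,f}\mathbf{r}(e)$; (SCK2) $v=\sum_{e\in\mathbf{s}^{-1}(v)}ee^*$ for $v\in S$; and $L_K(F)=CL_K(F,R(F))$ for any graph $F$. These are involutive $K$-algebras via $(\sum a_ip_iq_i^* )^*=\sum a_i^*q_ip_i^*$, where $p^*=e_n^*\cdots e_1^*$, $v^*=v$. A $*$-isomorphism is an algebra isomorphism $f$ with $f(x^* )=f(x)^*$. *)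

From HB Require Import structures.
From mathcomp Require Import all_boot all_order all_algebra.
From Stdlib Require List.
From Stdlib Require Import ClassicalEpsilon.
Set Implicit Arguments. Unset Strict Implicit. Unset Printing Implicit Defensive.
Import GRing.Theory.
Local Open Scope ring_scope.

Record graph := Graph {
  vertex : Type;
  edge : Type;
  src : edge -> vertex;
  rng : edge -> vertex }.

Definition enumerates (E : graph) (v : vertex E) (l : seq (edge E)) : Prop :=
  List.NoDup l /\ (forall e, List.In e l <-> src e = v).

Definition regular (E : graph) (v : vertex E) : Prop :=
  exists l : seq (edge E), l <> [::] /\ enumerates v l.

Record nualg (K : fieldType) := NuAlg {
  nu_car :> lmodType K;
  nu_mul : nu_car -> nu_car -> nu_car;
  nu_mulA : forall x y z, nu_mul x (nu_mul y z) = nu_mul (nu_mul x y) z;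
  nu_mulDl : forall x y z, nu_mul (x + y) z = nu_mul x z + nu_mul y z;
  nu_mulDr : forall x y z, nu_mul x (y + z) = nu_mul x y + nu_mul x z;
  nu_mulZl : forall (a : K) x y, nu_mul (a *: x) y = a *: nu_mul x y;
  nu_mulZr : forall (a : K) x y, nu_mul x (a *: y) = a *: nu_mul x y }.

Definition is_alg_hom (K : fieldType) (A B : nualg K) (f : A -> B) : Prop :=
  [/\ forall x y, f (x + y) = f x + f y,
      forall (a : K) x, f (a *: x) = a *: f x &
      forall x y, f (nu_mul x y) = nu_mul (f x) (f y)].

Definition is_algebra_involution (K : fieldType) (inv : K -> K) (A : nualg K)
    (star : A -> A) : Prop :=
  [/\ forall x y, star (x + y) = star x + star y,
      forall (a : K) x, star (a *: x) = inv a *: star x,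
      forall x y, star (nu_mul x y) = nu_mul (star y) (star x) &
      forall x, star (star x) = x].

(* Cohn-Leavitt families: images p v, s e, g e (= e^* ) of the         *)
(* generators satisfying (V),(E1),(E2),(CK1),(SCK2) for S.             *)
Definition CL_family (K : fieldType) (E : graph) (S : vertex E -> Prop)
    (A : nualg K) (p : vertex E -> A) (s g : edge E -> A) : Prop :=
  ((forall v, nu_mul (p v) (p v) = p v) /\
   (forall v w, v <> w -> nu_mul (p v) (p w) = 0)) /\
  (forall e, nu_mul (p (src e)) (s e) = s e /\ nu_mul (s e) (p (rng e)) = s e) /\
  (forall e, nu_mul (p (rng e)) (g e) = g e /\ nu_mul (g e) (p (src e)) = g e) /\
  ((forall e, nu_mul (g e) (s e) = p (rng e)) /\
   (forall e f, e <> f -> nu_mul (g e) (s f) = 0)) /\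
  (forall v, S v -> forall l, enumerates v l ->
     p v = \sum_(e <- l) nu_mul (s e) (g e)).

(* A (with generators p, s, g) is CL_K(E,S): the free K-algebra on
   E^0 u E^1 u (E^1)^* modulo the relations, i.e. the universal one. *)
Definition is_CL_algebra (K : fieldType) (E : graph) (S : vertex E -> Prop)
    (A : nualg K) (p : vertex E -> A) (s g : edge E -> A) : Prop :=
  CL_family S p s g /\
  forall (B : nualg K) (p' : vertex E -> B) (s' g' : edge E -> B),
    CL_family S p' s' g' ->
    exists f : A -> B,
      [/\ is_alg_hom f, (forall v, f (p v) = p' v),
          (forall e, f (s e) = s' e), (forall e, f (g e) = g' e) &
          forall f' : A -> B, is_alg_hom f' ->
            (forall v, f' (p v) = p' v) -> (forall e, f' (s e) = s' e) ->
            (forall e, f' (g e) = g' e) -> forall x, f' x = f x].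

Definition is_CL_star (K : fieldType) (inv : K -> K) (E : graph)
    (A : nualg K) (p : vertex E -> A) (s g : edge E -> A) (star : A -> A) : Prop :=
  [/\ is_algebra_involution inv star,
      (forall v, star (p v) = p v),
      (forall e, star (s e) = g e) &
      (forall e, star (g e) = s e)].

Definition is_L_algebra (K : fieldType) (F : graph) (A : nualg K)
    (p : vertex F -> A) (s g : edge F -> A) : Prop :=
  is_CL_algebra (@regular F) p s g.

Section ES.
Variables (E : graph) (S : vertex E -> Prop).

Definition RminusS (v : vertex E) : Prop := regular v /\ ~ S v.

Definition ES_vertex : Type := (vertex E + {v : vertex E | RminusS v})%type.
Definition ES_edge : Type := (edge E + {e : edge E | RminusS (rng e)})%type.

Definition ES_base (x : ES_edge) : edge E :=
  match x with inl e => e | inr e' => proj1_sig e' end.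

Definition ES_src (x : ES_edge) : ES_vertex := inl (src (ES_base x)).

Definition ES_rng (x : ES_edge) : ES_vertex :=
  match x with
  | inl e => inl (rng e)
  | inr e' => inr (exist _ (rng (proj1_sig e')) (proj2_sig e'))
  end.

Definition ES : graph := @Graph ES_vertex ES_edge ES_src ES_rng.
End ES.

Definition pdec (P : Prop) : {P} + {~ P} := excluded_middle_informative P.

(* a chosen enumeration of s^{-1}(v) (meaningful for regular v) *)
Definition enum_out (E : graph) (v : vertex E) : seq (edge E) :=
  epsilon (inhabits [::]) (fun l => enumerates v l).

Section Phi.
Variables (K : fieldType) (E : graph) (S : vertex E -> Prop) (A : nualg K)
  (p : vertex E -> A) (s g : edge E -> A) (star : A -> A).

Definition sum_out (v : vertex E) : A :=
  \sum_(e <- enum_out v) nu_mul (s e) (g e).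

Definition phiV (x : vertex (ES S)) : A :=
  match x with
  | inl v => if pdec (RminusS S v) then sum_out v else p v
  | inr v' => p (proj1_sig v') - sum_out (proj1_sig v')
  end.

Definition phiE (x : edge (ES S)) : A :=
  nu_mul (s (ES_base x)) (phiV (rng x)).

Definition phiG (x : edge (ES S)) : A := star (phiE x).
End Phi.

(* Write [q v] for [sum_out v], the sum of [e e^*] over the edges leaving a regular [v].
   In CL_K(E,S) the elements [q v] and [v - q v] are orthogonal idempotents, so the
   proposed images satisfy the Cohn-Leavitt relations of E_S. In the main one, (CK2)
   at a regular vertex [v] of E_S, the terms of an edge [e] and of its primed copy
   [e'] add up to [e (q + (r(e) - q)) e^* = e e^*] (with [q = q (r(e))]), and these
   sum to [q v].
   Conversely [v |-> v + v'] and [e |-> e + e'] (dropping the primed term when absent)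
   satisfy the relations of CL_K(E,S) in L_K(E_S). The induced homomorphisms are
   mutually inverse on generators, hence inverse, and [phi] commutes with the
   involutions by the uniqueness part of the universal property. *)

From Pilot Require Import Defs.
From HB Require Import structures.
From mathcomp Require Import all_boot all_order all_algebra.
From Stdlib Require Import ClassicalEpsilon Permutation ProofIrrelevance.
From Stdlib Require List FinFun.
Set Implicit Arguments. Unset Strict Implicit. Unset Printing Implicit Defensive.
Import GRing.Theory.
Local Open Scope ring_scope.

Local Notation "x ** y" := (nu_mul x y) (at level 40, left associativity).

Section Sums.
Variables (V : nmodType) (T : Type).

Lemma eq_big_In (L : seq T) (F G : T -> V) :
  (forall e, List.In e L -> F e = G e) ->
  \sum_(e <- L) F e = \sum_(e <- L) G e.
Proof.
elim: L => [|a L IH] FG; first by rewrite !big_nil.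
by rewrite !big_cons FG /= ?IH //; [move=> e Le; apply: FG; right | left].
Qed.

Lemma big1_In (L : seq T) (F : T -> V) :
  (forall e, List.In e L -> F e = 0) -> \sum_(e <- L) F e = 0.
Proof. by move=> F0; rewrite (eq_big_In (G := fun=> 0)) // big1. Qed.

Lemma big_NoDup_In1 (L : seq T) (F : T -> V) (e : T) :
  List.NoDup L -> List.In e L ->
  (forall f, List.In f L -> f <> e -> F f = 0) ->
  \sum_(f <- L) F f = F e.
Proof.
elim: L => [|a L IH] // /List.NoDup_cons_iff[aL ndL] Le F0; rewrite big_cons.
case: Le => [ae|Le].
  subst a; rewrite big1_In ?addr0 // => f Lf; apply: F0; first by right.
  by move=> fe; subst f.
rewrite F0 /= ?add0r ?IH //; first by move=> f Lf; apply: F0; right.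
- by left.
- by move=> ae; subst a.
Qed.

Lemma big_Permutation (L L' : seq T) (F : T -> V) :
  Permutation L L' -> \sum_(e <- L) F e = \sum_(e <- L') F e.
Proof.
elim=> [|x l l' _ IH|x y l|l l' l'' _ IH1 _ IH2] //.
- by rewrite !big_cons IH.
- by rewrite !big_cons addrCA.
- by rewrite IH1.
Qed.
End Sums.

Section AdditiveMaps.
Variables (V W : zmodType) (h : V -> W).
Hypothesis h_add : {morph h : x y / x + y}.

Lemma addf0 : h 0 = 0.
Proof. by apply: (addrI (h 0)); rewrite -h_add !addr0. Qed.

Lemma addfB x y : h (x - y) = h x - h y.
Proof.
suff hN : h (- y) = - h y by rewrite h_add hN.
by apply: (addrI (h y)); rewrite -h_add !subrr addf0.
Qed.

Lemma addf_sum (I : Type) (L : seq I) (F : I -> V) :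
  h (\sum_(e <- L) F e) = \sum_(e <- L) h (F e).
Proof. exact: (big_morph h h_add addf0). Qed.
End AdditiveMaps.

Section NuAlgebra.
Variables (K : fieldType) (A : nualg K).
Implicit Types x y z : A.

Lemma nu_mul0r x : 0 ** x = 0.
Proof. by rewrite -(scale0r (0 : A)) nu_mulZl !scale0r. Qed.

Lemma nu_mulr0 x : x ** 0 = 0.
Proof. by rewrite -(scale0r (0 : A)) nu_mulZr !scale0r. Qed.

Lemma nu_mulBl x y z : (x - y) ** z = x ** z - y ** z.
Proof. by rewrite nu_mulDl -scaleN1r nu_mulZl scaleN1r. Qed.

Lemma nu_mulBr x y z : x ** (y - z) = x ** y - x ** z.
Proof. by rewrite nu_mulDr -scaleN1r nu_mulZr scaleN1r. Qed.

Lemma nu_mul_suml (I : Type) (L : seq I) (F : I -> A) y :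
  (\sum_(e <- L) F e) ** y = \sum_(e <- L) (F e ** y).
Proof. exact: (big_morph (fun x => x ** y) (fun a b => nu_mulDl a b y) (nu_mul0r y)). Qed.

Lemma nu_mul_sumr (I : Type) (L : seq I) (F : I -> A) y :
  y ** (\sum_(e <- L) F e) = \sum_(e <- L) (y ** F e).
Proof. exact: (big_morph (fun x => y ** x) (nu_mulDr y) (nu_mulr0 y)). Qed.
End NuAlgebra.

Section CLFamily.
Variables (K : fieldType) (E : graph) (S : vertex E -> Prop) (A : nualg K)
  (p : vertex E -> A) (s g : edge E -> A).
Hypothesis HF : CL_family S p s g.

Lemma CL_idem v : p v ** p v = p v.
Proof. by case: HF => -[]. Qed.

Lemma CL_orth v w : v <> w -> p v ** p w = 0.
Proof. by case: HF => -[_ orth] _; apply: orth. Qed.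

Lemma CL_src_s e : p (src e) ** s e = s e.
Proof. by case: HF => _ [/(_ e)[]]. Qed.

Lemma CL_s_rng e : s e ** p (rng e) = s e.
Proof. by case: HF => _ [/(_ e)[]]. Qed.

Lemma CL_rng_g e : p (rng e) ** g e = g e.
Proof. by case: HF => _ [_ [/(_ e)[]]]. Qed.

Lemma CL_g_src e : g e ** p (src e) = g e.
Proof. by case: HF => _ [_ [/(_ e)[]]]. Qed.

Lemma CL_gs e : g e ** s e = p (rng e).
Proof. by case: HF => _ [_ [_ [[]]]]. Qed.

Lemma CL_gs0 e f : e <> f -> g e ** s f = 0.
Proof. by case: HF => _ [_ [_ [[_ gs0] _]]]; apply: gs0. Qed.

Lemma CL_sck v l : S v -> enumerates v l -> p v = \sum_(e <- l) s e ** g e.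
Proof. by move=> Sv vl; case: HF => _ [_ [_ [_ sck]]]; apply: sck. Qed.

Lemma CL_ps0 w e : w <> src e -> p w ** s e = 0.
Proof. by move=> wNe; rewrite -CL_src_s nu_mulA CL_orth // nu_mul0r. Qed.

Lemma CL_sp0 e w : w <> rng e -> s e ** p w = 0.
Proof. by move=> wNe; rewrite -CL_s_rng -nu_mulA CL_orth ?nu_mulr0 // => /esym. Qed.
End CLFamily.

Lemma alg_hom_comp (K : fieldType) (A B C : nualg K) (f : A -> B) (h : B -> C) :
  is_alg_hom f -> is_alg_hom h -> is_alg_hom (h \o f).
Proof. by move=> [fD fZ fM] [hD hZ hM]; split=> * /=; rewrite ?fD ?fZ ?fM ?hD ?hZ ?hM. Qed.

Section CLUniversal.
Variables (K : fieldType) (E : graph) (S : vertex E -> Prop) (A C : nualg K)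
  (p : vertex E -> A) (s g : edge E -> A).

Lemma CL_family_hom (h : A -> C) : is_alg_hom h -> CL_family S p s g ->
  CL_family S (h \o p) (h \o s) (h \o g).
Proof.
move=> [hD _ hM] HF; rewrite /comp.
split; [split|split; [|split; [|split; [split|]]]].
- by move=> v; rewrite -hM (CL_idem HF).
- by move=> v w vw; rewrite -hM (CL_orth HF) // (addf0 hD).
- by move=> e; rewrite -!hM (CL_src_s HF) (CL_s_rng HF).
- by move=> e; rewrite -!hM (CL_rng_g HF) (CL_g_src HF).
- by move=> e; rewrite -hM (CL_gs HF).
- by move=> e f ef; rewrite -hM (CL_gs0 HF) // (addf0 hD).
- move=> v Sv l vl; rewrite (CL_sck HF Sv vl) (addf_sum hD).
  by apply: eq_bigr => e _; rewrite hM.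
Qed.

Lemma CL_hom_unique (f1 f2 : A -> C) : is_CL_algebra S p s g ->
  is_alg_hom f1 -> is_alg_hom f2 ->
  (forall v, f1 (p v) = f2 (p v)) -> (forall e, f1 (s e) = f2 (s e)) ->
  (forall e, f1 (g e) = f2 (g e)) -> forall x, f1 x = f2 x.
Proof.
move=> [HF univ] f1h f2h f12p f12s f12g x.
have [f [_ _ _ _ f_unique]] := univ C _ _ _ (CL_family_hom f1h HF).
by rewrite (f_unique f1) // (f_unique f2) // => *; rewrite /= ?f12p ?f12s ?f12g.
Qed.

(* Both [h \o starA] and [starC \o h] are conjugate-linear; applying [starC] once
   more turns the first into a homomorphism that agrees with [h] on generators. *)
Lemma CL_hom_star (inv : K -> K) (starA : A -> A) (starC : C -> C) (h : A -> C) :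
  involutive inv -> is_CL_algebra S p s g -> is_CL_star inv p s g starA ->
  is_algebra_involution inv starC -> is_alg_hom h ->
  (forall v, starC (h (p v)) = h (p v)) -> (forall e, starC (h (s e)) = h (g e)) ->
  forall x, h (starA x) = starC (h x).
Proof.
move=> invK HA [[aD aZ aM aK] ap as_ ag] [cD cZ cM cK] [hD hZ hM] hp hs x.
have starC_h_starA : forall y, starC (h (starA y)) = h y.
  apply: (CL_hom_unique (f1 := starC \o h \o starA) HA) => //.
  - by split=> * /=; rewrite ?aD ?aZ ?aM ?hD ?hZ ?hM ?cD ?cZ ?cM ?invK.
  - by move=> v /=; rewrite ap hp.
  - by move=> e /=; rewrite as_ -hs cK.
  - by move=> e /=; rewrite ag hs.
by rewrite -[in RHS]starC_h_starA cK.
Qed.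
End CLUniversal.

Lemma cat_List_app (T : Type) (l1 l2 : seq T) : l1 ++ l2 = List.app l1 l2.
Proof. by elim: l1 => //= a l ->. Qed.

Lemma map_List_map (T U : Type) (f : T -> U) (l : seq T) : map f l = List.map f l.
Proof. by elim: l => //= a l ->. Qed.

Section Pmap.
Variables (T U : Type) (h : T -> option U).

Lemma In_pmap (L : seq T) y :
  List.In y (pmap h L) <-> exists2 x, List.In x L & h x = Some y.
Proof.
elim: L => [|a L IH] /=; first by split=> // -[].
case ha: (h a) => [b|] /=; rewrite IH; split.
- by case=> [<-|[x Lx hx]]; [exists a; [left|] | exists x; [right|]].
- by case=> x [<-|Lx] hx; [left; congruence | right; exists x].
- by case=> x Lx hx; exists x; [right|].
- by case=> x [<-|Lx] hx; [congruence | exists x].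
Qed.

Lemma NoDup_pmap (L : seq T) :
  (forall x x' y, h x = Some y -> h x' = Some y -> x = x') ->
  List.NoDup L -> List.NoDup (pmap h L).
Proof.
move=> h_inj; elim: L => [|a L IH] /=; first by constructor.
move/List.NoDup_cons_iff=> [aL ndL]; case ha: (h a) => [b|] /=; last exact: IH.
constructor; last exact: IH.
by case/In_pmap=> x Lx /(h_inj _ _ _ ha) ax; apply: aL; rewrite ax.
Qed.
End Pmap.

Lemma enum_out_enumerates (E : graph) (v : vertex E) :
  regular v -> enumerates v (enum_out v).
Proof.
by move=> [l [_ vl]]; apply: (epsilon_spec (inhabits [::]) (enumerates v) (ex_intro _ l vl)).
Qed.

Section ESGraph.
Variables (E : graph) (S : vertex E -> Prop).

Definition ES_vbase (x : vertex (ES S)) : vertex E :=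
  match x with inl v => v | inr v' => sval v' end.

Lemma ES_vbase_rng (f : edge (ES S)) : ES_vbase (rng f) = rng (ES_base f).
Proof. by case: f. Qed.

Lemma ES_rng_neq (f f' : edge (ES S)) :
  f <> f' -> ES_base f = ES_base f' -> rng f <> rng f'.
Proof.
case: f f' => [e|[e He]] [e'|[e' He']] //= ff' ee' [rr]; subst e'; apply: ff' => //.
by rewrite (proof_irrelevance _ He He').
Qed.

Definition primed_edge (e : edge E) : option (edge (ES S)) :=
  match pdec (RminusS S (rng e)) with
  | left H => Some (inr (exist _ e H))
  | right _ => None
  end.

Lemma primed_edge_inl e e' : primed_edge e <> Some (inl e').
Proof. by rewrite /primed_edge; case: pdec. Qed.

Lemma primed_edge_inr e x : primed_edge e = Some (inr x) <-> sval x = e.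
Proof.
rewrite /primed_edge; case: pdec => [He|He]; case: x => x Hx /=; split=> //.
- by case=> ->.
- by move=> xe; subst x; rewrite (proof_irrelevance _ He Hx).
- by move=> xe; subst x.
Qed.

(* The edges of E_S leaving [v] are the edges [e] of E leaving [v] together
   with the primed copies [e'] of those whose range lies in R(E) \ S. *)
Definition ES_out (L : seq (edge E)) : seq (edge (ES S)) :=
  map inl L ++ pmap primed_edge L.

Lemma In_ES_out f L : List.In f (ES_out L) <-> List.In (ES_base f) L.
Proof.
rewrite /ES_out cat_List_app List.in_app_iff map_List_map List.in_map_iff In_pmap.
case: f => [e|x] /=; split.
- by case=> [[e' [[<-]]] | [e' _ /primed_edge_inl]].
- by move=> Le; left; exists e.
- by case=> [[e' []] | [e' + /primed_edge_inr ->]].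
- by move=> Lx; right; exists (sval x) => //; apply/primed_edge_inr.
Qed.

Lemma NoDup_ES_out L : List.NoDup L -> List.NoDup (ES_out L).
Proof.
move=> ndL; rewrite /ES_out cat_List_app map_List_map; apply: List.NoDup_app.
- by apply: FinFun.Injective_map_NoDup => // e e' [].
- apply: NoDup_pmap => // e e' [e''|x]; first by move/primed_edge_inl.
  by move=> /primed_edge_inr <- /primed_edge_inr.
- by move=> f /List.in_map_iff[e [<- _]] /In_pmap[e' _ /primed_edge_inl].
Qed.

Lemma enumerates_ES_out v L :
  enumerates v L -> enumerates (E := ES S) (inl v) (ES_out L).
Proof.
move=> [ndL vL]; split; first exact: NoDup_ES_out.
by move=> f; rewrite In_ES_out vL /= /ES_src; split=> [->|[]].
Qed.

Lemma big_ES_out (V : nmodType) (F : edge (ES S) -> V) L :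
  \sum_(f <- ES_out L) F f = \sum_(e <- L) (F (inl e) + oapp F 0 (primed_edge e)).
Proof. by rewrite big_cat big_map big_pmap big_split. Qed.

Definition ES_unprimed (f : edge (ES S)) : option (edge E) :=
  if f is inl e then Some e else None.

Lemma regular_ES_inl v : regular (E := ES S) (inl v) <-> regular v.
Proof.
split=> [[l [l_nil [ndl vl]]] | [L [L_nil vL]]]; last first.
  exists (ES_out L); split; last exact: enumerates_ES_out.
  by case: L L_nil {vL}.
exists (pmap ES_unprimed l); split; last split.
- case: l l_nil vl {ndl} => [|f l] // _ vl.
  have [/(_ (or_introl erefl)) /= [fv] _] := vl f.
  have : List.In (ES_base f) (pmap ES_unprimed (f :: l)).
    by apply/In_pmap; exists (inl (ES_base f)) => //; apply/vl; rewrite /= /ES_src fv.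
  by move=> lf pnil; move: lf; rewrite /= pnil.
- by apply: NoDup_pmap => // -[e|x] [e'|x'] y /=; congruence.
- move=> e; rewrite In_pmap; split.
  + by case=> -[e'|x] lf //= [<-]; case/vl: lf.
  + by move=> ev; exists (inl e) => //; apply/vl; rewrite /= /ES_src ev.
Qed.

Lemma ES_primed_not_regular x : ~ regular (E := ES S) (inr x).
Proof. by move=> [[|f l] [_ [_ vl]]] //; case: (vl f) => /(_ (or_introl erefl)). Qed.
End ESGraph.

Section PhiFamily.
Variables (K : fieldType) (inv : K -> K) (E : graph) (S : vertex E -> Prop)
  (A : nualg K) (p : vertex E -> A) (s g : edge E -> A) (star : A -> A).
Hypothesis HF : CL_family S p s g.
Hypothesis Hstar : is_CL_star inv p s g star.

Local Notation q := (sum_out s g).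
Local Notation phi := (phiV (S := S) p s g).
Local Notation phiE := (phiE (S := S) p s g).
Local Notation phiG := (phiG (S := S) p s g star).

Lemma sum_out_s v e : regular v -> src e = v -> q v ** s e = s e.
Proof.
move=> /enum_out_enumerates[nd vL] ev; rewrite /sum_out nu_mul_suml.
rewrite (big_NoDup_In1 nd (proj2 (vL e) ev)).
- by rewrite -nu_mulA (CL_gs HF) (CL_s_rng HF).
- by move=> f _ fe; rewrite -nu_mulA (CL_gs0 HF) ?nu_mulr0.
Qed.

Lemma g_sum_out v e : regular v -> src e = v -> g e ** q v = g e.
Proof.
move=> /enum_out_enumerates[nd vL] ev; rewrite /sum_out nu_mul_sumr.
rewrite (big_NoDup_In1 nd (proj2 (vL e) ev)).
- by rewrite nu_mulA (CL_gs HF) (CL_rng_g HF).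
- by move=> f _ fe; rewrite nu_mulA (CL_gs0 HF) ?nu_mul0r // => /esym.
Qed.

Lemma p_sum_out v : regular v -> p v ** q v = q v.
Proof.
move=> /enum_out_enumerates[_ vL]; rewrite /sum_out nu_mul_sumr.
by apply: eq_big_In => f /vL fv; rewrite nu_mulA -fv (CL_src_s HF).
Qed.

Lemma sum_out_p v : regular v -> q v ** p v = q v.
Proof.
move=> /enum_out_enumerates[_ vL]; rewrite /sum_out nu_mul_suml.
by apply: eq_big_In => f /vL fv; rewrite -nu_mulA -fv (CL_g_src HF).
Qed.

Lemma sum_out_idem v : regular v -> q v ** q v = q v.
Proof.
move=> Rv; have [_ vL] := enum_out_enumerates Rv.
rewrite {1}/sum_out nu_mul_suml; apply: eq_big_In => f /vL fv.
by rewrite -nu_mulA g_sum_out.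
Qed.

Lemma star_sum_out v : star (q v) = q v.
Proof.
case: Hstar => -[stD _ stM _] _ stS stG.
by rewrite (addf_sum stD); apply: eq_bigr => e _; rewrite stM stS stG.
Qed.

Lemma phiV_RminusS v : RminusS S v -> phi (inl v) = q v.
Proof. by rewrite /=; case: pdec. Qed.

Lemma phiV_notRminusS v : ~ RminusS S v -> phi (inl v) = p v.
Proof. by rewrite /=; case: pdec. Qed.

Lemma phiV_regular v : regular v -> phi (inl v) = q v.
Proof.
move=> Rv; have [/phiV_RminusS //|vNRS] := classic (RminusS S v).
rewrite phiV_notRminusS //; apply: (CL_sck HF _ (enum_out_enumerates Rv)).
by apply: NNPP => vNS; apply: vNRS.
Qed.

Lemma p_phiV x : p (ES_vbase x) ** phi x = phi x.
Proof.
case: x => [v|[v Hv]]; last by rewrite /= nu_mulBr (CL_idem HF) (p_sum_out Hv.1).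
have [Hv|Hv] := classic (RminusS S v).
  by rewrite phiV_RminusS //; apply/p_sum_out/Hv.1.
by rewrite phiV_notRminusS //; apply: (CL_idem HF).
Qed.

Lemma phiV_p x : phi x ** p (ES_vbase x) = phi x.
Proof.
case: x => [v|[v Hv]]; last by rewrite /= nu_mulBl (CL_idem HF) (sum_out_p Hv.1).
have [Hv|Hv] := classic (RminusS S v).
  by rewrite phiV_RminusS //; apply/sum_out_p/Hv.1.
by rewrite phiV_notRminusS //; apply: (CL_idem HF).
Qed.

Lemma phiV_idem x : phi x ** phi x = phi x.
Proof.
case: x => [v|[v Hv]].
  have [Hv|Hv] := classic (RminusS S v).
    by rewrite phiV_RminusS //; apply/sum_out_idem/Hv.1.
  by rewrite phiV_notRminusS //; apply: (CL_idem HF).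
rewrite /= nu_mulBl !nu_mulBr (CL_idem HF) (p_sum_out Hv.1) (sum_out_p Hv.1).
by rewrite (sum_out_idem Hv.1) subrr subr0.
Qed.

Lemma phiV_orth x y : x <> y -> phi x ** phi y = 0.
Proof.
move=> xy; have [bxy|bxy] := classic (ES_vbase x = ES_vbase y); last first.
  rewrite -(phiV_p x) -(p_phiV y) -nu_mulA (nu_mulA (p _)) (CL_orth HF) //.
  by rewrite nu_mul0r nu_mulr0.
case: x y xy bxy => [v|[v Hv]] [w|[w Hw]] // xy vw; rewrite /= in vw; subst w.
- by case: xy.
- rewrite (phiV_RminusS Hw) nu_mulBr sum_out_p ?sum_out_idem ?subrr //; exact: Hw.1.
- rewrite (phiV_RminusS Hv) nu_mulBl p_sum_out ?sum_out_idem ?subrr //; exact: Hv.1.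
- by case: xy; rewrite (proof_irrelevance _ Hv Hw).
Qed.

Lemma star_phiV x : star (phi x) = phi x.
Proof.
case: Hstar => -[stD _ _ _] stp _ _.
case: x => [v|[v Hv]]; last by rewrite /= (addfB stD) stp star_sum_out.
have [Hv|Hv] := classic (RminusS S v); first by rewrite phiV_RminusS // star_sum_out.
by rewrite phiV_notRminusS.
Qed.

Lemma phiGE f : phiG f = phi (rng f) ** g (ES_base f).
Proof. by case: Hstar => -[_ _ stM _] _ stS _; rewrite /Defs.phiG stM star_phiV stS. Qed.

Lemma phiE_phiG f : phiE f ** phiG f = s (ES_base f) ** phi (rng f) ** g (ES_base f).
Proof. by rewrite phiGE /Defs.phiE nu_mulA -(nu_mulA (s _)) phiV_idem. Qed.

Lemma phiV_src_s (f : edge (ES S)) : phi (src f) ** s (ES_base f) = s (ES_base f).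
Proof.
have [Hv|Hv] := classic (RminusS S (src (ES_base f))).
  by rewrite phiV_RminusS // (sum_out_s Hv.1).
by rewrite phiV_notRminusS // (CL_src_s HF).
Qed.

Lemma g_phiV_src (f : edge (ES S)) : g (ES_base f) ** phi (src f) = g (ES_base f).
Proof.
have [Hv|Hv] := classic (RminusS S (src (ES_base f))).
  by rewrite phiV_RminusS // (g_sum_out Hv.1).
by rewrite phiV_notRminusS // (CL_g_src HF).
Qed.

Lemma phiV_sck x l : regular x -> enumerates x l ->
  phi x = \sum_(f <- l) phiE f ** phiG f.
Proof.
case: x => [v|x]; last by move/ES_primed_not_regular.
move=> /regular_ES_inl Rv [ndl vl].
have [ndL vL] := enumerates_ES_out S (enum_out_enumerates Rv).
have perm : Permutation l (ES_out S (enum_out v)).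
  by apply: NoDup_Permutation => // f; rewrite vl vL.
rewrite (big_Permutation _ perm) big_ES_out phiV_regular //; apply: eq_bigr => e _.
rewrite phiE_phiG /primed_edge; case: pdec => He.
- rewrite (phiV_RminusS He) /= phiE_phiG /= -nu_mulDl -nu_mulDr.
  by rewrite addrC subrK (CL_s_rng HF).
- by rewrite (phiV_notRminusS He) addr0 (CL_s_rng HF).
Qed.

Lemma CL_family_phi : CL_family (@regular (ES S)) phi phiE phiG.
Proof.
split; [split|split; [|split; [|split; [split|]]]].
- exact: phiV_idem.
- exact: phiV_orth.
- by move=> f; rewrite /Defs.phiE nu_mulA phiV_src_s -nu_mulA phiV_idem.
- by move=> f; rewrite phiGE nu_mulA phiV_idem -nu_mulA g_phiV_src.
- move=> f; rewrite phiGE /Defs.phiE -nu_mulA (nu_mulA (g _)) (CL_gs HF).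
  by rewrite -ES_vbase_rng p_phiV phiV_idem.
- move=> f f' ff'; rewrite phiGE /Defs.phiE -nu_mulA (nu_mulA (g _)).
  have [bb'|bb'] := classic (ES_base f = ES_base f'); last first.
    by rewrite (CL_gs0 HF) // nu_mul0r nu_mulr0.
  rewrite bb' (CL_gs HF) -ES_vbase_rng p_phiV.
  exact/phiV_orth/ES_rng_neq.
- by move=> x Rx l; apply: phiV_sck.
Qed.
End PhiFamily.

Section PsiFamily.
Variables (K : fieldType) (inv : K -> K) (E : graph) (S : vertex E -> Prop).
Hypothesis HS : forall v, S v -> regular v.
Variables (B : nualg K) (p : vertex (ES S) -> B) (s g : edge (ES S) -> B)
  (star : B -> B).
Hypothesis HF : CL_family (@regular (ES S)) p s g.
Hypothesis Hstar : is_CL_star inv p s g star.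

Definition psiV (v : vertex E) : B :=
  match pdec (RminusS S v) with
  | left H => p (inl v) + p (inr (exist _ v H))
  | right _ => p (inl v)
  end.

Definition psiE (e : edge E) : B :=
  match pdec (RminusS S (rng e)) with
  | left H => s (inl e) + s (inr (exist (fun e => RminusS S (rng e)) e H))
  | right _ => s (inl e)
  end.

Definition psiG (e : edge E) : B :=
  match pdec (RminusS S (rng e)) with
  | left H => g (inl e) + g (inr (exist (fun e => RminusS S (rng e)) e H))
  | right _ => g (inl e)
  end.

Lemma p_orth_vbase x y : ES_vbase x <> ES_vbase y -> p x ** p y = 0.
Proof. by move=> xy; apply: (CL_orth HF) => /(congr1 (@ES_vbase _ _)). Qed.

Lemma s_g_rng0 (f f' : edge (ES S)) : rng f <> rng f' -> s f ** g f' = 0.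
Proof.
move=> ff'; rewrite -(CL_s_rng HF f) -(CL_rng_g HF f') -nu_mulA (nu_mulA (p _)).
by rewrite (CL_orth HF) // nu_mul0r nu_mulr0.
Qed.

Lemma g_s_base0 (f f' : edge (ES S)) : ES_base f <> ES_base f' -> g f ** s f' = 0.
Proof. by move=> ff'; apply: (CL_gs0 HF) => /(congr1 (@ES_base _ _)). Qed.

Lemma psiV_idem v : psiV v ** psiV v = psiV v.
Proof.
rewrite /psiV; case: pdec => H; last exact: (CL_idem HF).
by rewrite nu_mulDl !nu_mulDr !(CL_idem HF) !(CL_orth HF) // addr0 add0r.
Qed.

Lemma psiV_orth v w : v <> w -> psiV v ** psiV w = 0.
Proof.
move=> vw; rewrite /psiV.
by case: pdec => Hv; case: pdec => Hw; rewrite ?nu_mulDl ?nu_mulDr !p_orth_vbase // ?addr0.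
Qed.

Lemma star_psiV v : star (psiV v) = psiV v.
Proof.
case: Hstar => -[stD _ _ _] stp _ _.
by rewrite /psiV; case: pdec => H; rewrite ?stD !stp.
Qed.

Lemma star_psiE e : star (psiE e) = psiG e.
Proof.
case: Hstar => -[stD _ _ _] _ stS _.
by rewrite /psiE /psiG; case: pdec => H; rewrite ?stD !stS.
Qed.

Lemma psiV_src_s (f : edge (ES S)) : psiV (src (ES_base f)) ** s f = s f.
Proof.
rewrite /psiV; case: pdec => H; last exact: (CL_src_s HF f).
by rewrite nu_mulDl (CL_src_s HF f) (CL_ps0 HF) ?addr0.
Qed.

Lemma psiE_psiV_rng e : psiE e ** psiV (rng e) = psiE e.
Proof.
rewrite /psiE /psiV; case: pdec => H; last exact: (CL_s_rng HF (inl e)).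
rewrite !nu_mulDl !nu_mulDr (CL_s_rng HF (inl e)).
rewrite (CL_s_rng HF (inr (exist (fun e => RminusS S (rng e)) e H))).
by rewrite !(CL_sp0 HF) // addr0 add0r.
Qed.

Lemma sum_psiE_psiG v L : regular v -> enumerates v L ->
  \sum_(e <- L) psiE e ** psiG e = p (inl v).
Proof.
move=> Rv vL; rewrite (CL_sck HF (proj2 (regular_ES_inl S v) Rv) (enumerates_ES_out S vL)).
rewrite big_ES_out; apply: eq_bigr => e _; rewrite /psiE /psiG /primed_edge.
case: pdec => H /=; last by rewrite addr0.
rewrite !nu_mulDl !nu_mulDr (s_g_rng0 (f := inl e) (f' := inr _)) //.
by rewrite (s_g_rng0 (f := inr _) (f' := inl e)) // addr0 add0r.
Qed.

Lemma CL_family_psi : CL_family S psiV psiE psiG.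
Proof.
have psiV_src_psiE e : psiV (src e) ** psiE e = psiE e.
  rewrite /psiE; case: pdec => H; rewrite ?nu_mulDr (psiV_src_s (inl e)) //.
  by rewrite (psiV_src_s (inr (exist _ e H))).
split; [split|split; [|split; [|split; [split|]]]].
- exact: psiV_idem.
- exact: psiV_orth.
- by move=> e; rewrite psiV_src_psiE psiE_psiV_rng.
- case: Hstar => -[_ _ stM _] _ _ _ e.
  by split; rewrite -star_psiE -star_psiV -stM ?psiE_psiV_rng ?psiV_src_psiE.
- move=> e; rewrite /psiE /psiG /psiV; case: pdec => H; last exact: (CL_gs HF (inl e)).
  by rewrite !nu_mulDl !nu_mulDr !(CL_gs HF) !(CL_gs0 HF) // addr0 add0r.
- move=> e f ef; rewrite /psiE /psiG.
  by case: pdec => He; case: pdec => Hf; rewrite ?nu_mulDl ?nu_mulDr !g_s_base0 // ?addr0.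
- move=> v Sv l vl; rewrite (sum_psiE_psiG (HS Sv) vl) /psiV.
  by case: pdec => // -[].
Qed.
End PsiFamily.

Section Isomorphism.
Variables (K : fieldType) (inv : K -> K) (E : graph) (S : vertex E -> Prop).
Hypotheses (Hinv : involutive inv) (HS : forall v, S v -> regular v).
Variables (A : nualg K) (pA : vertex E -> A) (sA gA : edge E -> A) (starA : A -> A).
Variables (B : nualg K) (pB : vertex (ES S) -> B) (sB gB : edge (ES S) -> B)
  (starB : B -> B).
Hypotheses (HA : is_CL_algebra S pA sA gA) (HstarA : is_CL_star inv pA sA gA starA).
Hypotheses (HB : is_L_algebra pB sB gB) (HstarB : is_CL_star inv pB sB gB starB).
Variable phi : B -> A.
Hypotheses (phi_hom : is_alg_hom phi)
  (phi_p : forall x, phi (pB x) = phiV pA sA gA x)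
  (phi_s : forall f, phi (sB f) = phiE pA sA gA f)
  (phi_g : forall f, phi (gB f) = phiG pA sA gA starA f).

Let FA : CL_family S pA sA gA := HA.1.
Let FB : CL_family (@regular (ES S)) pB sB gB := HB.1.

Lemma phi_star x : phi (starB x) = starA (phi x).
Proof.
case: HstarA => invA _ _ _; apply: (CL_hom_star Hinv HB HstarB invA phi_hom) => [v|e].
  by rewrite phi_p (star_phiV HstarA).
by rewrite phi_s phi_g.
Qed.

Section Inverse.
Variable psi : A -> B.
Hypotheses (psi_hom : is_alg_hom psi)
  (psi_p : forall v, psi (pA v) = psiV pB v)
  (psi_s : forall e, psi (sA e) = psiE sB e)
  (psi_g : forall e, psi (gA e) = psiG gB e).

Lemma psi_star x : psi (starA x) = starB (psi x).
Proof.
case: HstarB => invB _ _ _; apply: (CL_hom_star Hinv HA HstarA invB psi_hom) => [v|e].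
  by rewrite psi_p (star_psiV HstarB).
by rewrite psi_s psi_g (star_psiE HstarB).
Qed.

Lemma phi_psiV v : phi (psiV pB v) = pA v.
Proof.
case: phi_hom => phiD _ _.
rewrite /psiV; case: pdec => H; rewrite ?phiD !phi_p; last exact: phiV_notRminusS.
by rewrite (phiV_RminusS _ _ _ H) /= addrC subrK.
Qed.

Lemma phi_psiE e : phi (psiE sB e) = sA e.
Proof.
case: phi_hom => phiD _ _.
rewrite /psiE; case: pdec => H; rewrite ?phiD !phi_s /Defs.phiE.
  by rewrite (phiV_RminusS _ _ _ H) /= -nu_mulDr addrC subrK (CL_s_rng FA).
by rewrite (phiV_notRminusS _ _ _ H) (CL_s_rng FA).
Qed.

Lemma phi_psi x : phi (psi x) = x.
Proof.
apply: (CL_hom_unique (f1 := phi \o psi) (f2 := id) HA) => //.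
- exact: alg_hom_comp.
- by move=> v /=; rewrite psi_p phi_psiV.
- by move=> e /=; rewrite psi_s phi_psiE.
- move=> e /=; rewrite psi_g -(star_psiE HstarB) phi_star phi_psiE.
  by case: HstarA.
Qed.

Lemma psi_sum_out v : regular v -> psi (sum_out sA gA v) = pB (inl v).
Proof.
case: psi_hom => psiD _ psiM Rv.
rewrite /sum_out (addf_sum psiD) -(sum_psiE_psiG FB Rv (enum_out_enumerates Rv)).
by apply: eq_bigr => e _; rewrite psiM psi_s psi_g.
Qed.

Lemma psi_phiV x : psi (phiV pA sA gA x) = pB x.
Proof.
case: psi_hom => psiD _ _; case: x => [v|[v Hv]].
  have [H|H] := classic (RminusS S v).
    by rewrite phiV_RminusS // psi_sum_out //; case: H.
  by rewrite phiV_notRminusS // psi_p /psiV; case: pdec.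
rewrite /= (addfB psiD) psi_p psi_sum_out; last by case: Hv.
rewrite /psiV; case: pdec => // H.
by rewrite (proof_irrelevance _ H Hv) addrC addKr.
Qed.

Lemma psi_phi_s f : psi (phi (sB f)) = sB f.
Proof.
case: psi_hom => _ _ psiM.
rewrite phi_s /Defs.phiE psiM psi_s psi_phiV.
case: f => [e|[e He]] /=; rewrite /psiE; case: pdec => H.
- by rewrite nu_mulDl (CL_s_rng FB (inl e)) (CL_sp0 FB) ?addr0.
- exact: (CL_s_rng FB (inl e)).
- rewrite (proof_irrelevance _ H He) nu_mulDl (CL_sp0 FB) ?add0r //.
  exact: (CL_s_rng FB (inr _)).
- by [].
Qed.

Lemma psi_phi x : psi (phi x) = x.
Proof.
apply: (CL_hom_unique (f1 := psi \o phi) (f2 := id) HB) => //.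
- exact: alg_hom_comp.
- by move=> v /=; rewrite phi_p psi_phiV.
- exact: psi_phi_s.
- move=> f /=; case: HstarB => _ _ stS stG.
  by rewrite -stS phi_star psi_star psi_phi_s stS.
Qed.
End Inverse.

Lemma phi_bijective : bijective phi.
Proof.
have [psi [psi_hom psi_p psi_s psi_g _]] := HA.2 B _ _ _ (CL_family_psi HS FB HstarB).
exact: (Bijective (psi_phi psi_hom psi_p psi_s psi_g) (phi_psi psi_hom psi_p psi_s psi_g)).
Qed.
End Isomorphism.

Theorem lemma4p8 (K : fieldType) (inv : {rmorphism K -> K})
  (Hinv : involutive inv)
  (E : graph) (S : vertex E -> Prop) (HS : forall v, S v -> regular v)
  (A : nualg K) (pA : vertex E -> A) (sA gA : edge E -> A) (starA : A -> A)
  (HA : is_CL_algebra S pA sA gA) (HstarA : is_CL_star inv pA sA gA starA)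
  (B : nualg K) (pB : vertex (ES S) -> B) (sB gB : edge (ES S) -> B)
  (starB : B -> B)
  (HB : is_L_algebra pB sB gB) (HstarB : is_CL_star inv pB sB gB starB) :
  exists phi : B -> A,
    [/\ is_alg_hom phi, bijective phi &
        forall x, phi (starB x) = starA (phi x)] /\
    [/\ (forall v, phi (pB v) = phiV pA sA gA v),
        (forall e, phi (sB e) = phiE pA sA gA e) &
        (forall e, phi (gB e) = phiG pA sA gA starA e)] /\
    forall psi : B -> A, is_alg_hom psi ->
      (forall v, psi (pB v) = phiV pA sA gA v) ->
      (forall e, psi (sB e) = phiE pA sA gA e) ->
      (forall e, psi (gB e) = phiG pA sA gA starA e) ->
      forall x, psi x = phi x.
Proof.
have [phi [phi_hom phi_p phi_s phi_g _]] :=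
  HB.2 A _ _ _ (CL_family_phi HA.1 HstarA).
exists phi; split; last split.
- split=> //.
  + exact: (phi_bijective Hinv HS HA HstarA HB HstarB phi_hom phi_p phi_s phi_g).
  + exact: (phi_star Hinv HstarA HB HstarB phi_hom phi_p phi_s phi_g).
- by split.
- move=> phi' phi'_hom phi'_p phi'_s phi'_g.
  apply: (CL_hom_unique HB phi'_hom phi_hom).
  + by move=> v; rewrite phi'_p phi_p.
  + by move=> e; rewrite phi'_s phi_s.
  + by move=> e; rewrite phi'_g phi_g.
Qed.
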